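(* Let $G$ be a finite additive abelian group of order $v$ and suppose there exists a difference family DF$(v,k,\lambda)$ over $G$ (with $2\le k\le v$). Then there exists an authentication system with $k$ source states, $v$ messages and $b=\lambda v(v-1)/(k^2-k)$ encoding rules which, when the source states are equiprobable and the encoding rules are used with equal probability, has perfect secrecy and is onefold secure against spoofing. Moreover, the system is optimal (i.e. $b=v(v-1)/(k(k-1))$) if and only if $\lambda=1$.
   Context: A difference family DF$(v,k,\lambda)$ over an additive abelian group $G$ of order $v$ is a family $\{D_1,\dots,D_l\}$ of $k$-subsets of $G$ such that the multiset $\bigcup_{i=1}^l\{x-y: x,y\in D_i,\ x\ne y\}$ contains every nonzero element of $G$ exactly $\lambda$ times. Authentication system: finite sets $\mathcal{S}$ of $k$ source states, $\mathcal{M}$ of $v$ messages, $\mathcal{E}$ of $b$ encoding rules, each $e\in\mathcal{E}$ an injective map $\mathcal{S}\to\mathcal{M}$; $M(e)=\{e(s):s\in\mathcal{S}\}$ is the set of messages valid (accepted) under $e$. A key $e$ is drawn according to a distribution $p_E$ on $\mathcal{E}$, source states according to $p_S$, independently; ''equiprobable source states'' means source states are independent and uniformly distributed, and for each $i$ every $i$-subset of distinct source states is equally likely to be the set of sent source states. Perfect secrecy: $p_S(s\mid m)=p_S(s)$ for every $s\in\mathcal{S}$ and every message $m$. Spoofing attack of order $i$: the opponent observes $i\ge 0$ distinct messages produced from $i$ distinct source states under the same secret key $e$, and then sends a new message distinct from these; he succeeds if it lies in $M(e)$. The deception probability $P_{d_i}$ is the maximum success probability over all opponent strategies. The system is called $t$-fold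 secure against spoofing if $P_{d_i}=(k-i)/(v-i)$ for all $0\le i\le t$. A onefold secure system always has $b\ge \binom{v}{2}/\binom{k}{2}$; it is called optimal when equality holds. *)

From HB Require Import structures.
From mathcomp Require Import all_boot all_order all_algebra.
Set Implicit Arguments. Unset Strict Implicit. Unset Printing Implicit Defensive.
Import Order.TTheory GRing.Theory Num.Theory.
Local Open Scope ring_scope.

Definition diff_count (G : finZmodType) (D : {set G}) (g : G) : nat :=
  #|[set xy in setX D D | (xy.1 != xy.2) && (xy.1 - xy.2 == g)]|.

Definition is_DF (G : finZmodType) (F : seq {set G}) (k lambda : nat) : Prop :=
  (forall D, D \in F -> #|D| = k) /\
  (forall g : G, g != 0 -> (\sum_(D <- F) diff_count D g)%N = lambda).

Definition uniform (T : finType) : T -> rat := fun _ => 1 / (#|T|%:R).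
Arguments uniform T _ : clear implicits.

Section Auth.
Variables (S M E : finType) (enc : E -> S -> M).

Definition auth_system : Prop := forall e, injective (enc e).

Definition valid (e : E) : {set M} := [set enc e s | s in S].

Definition probM (pE : E -> rat) (pS : S -> rat) (m : M) : rat :=
  \sum_(e : E) \sum_(s : S) (if enc e s == m then pE e * pS s else 0).

Definition probSM (pE : E -> rat) (pS : S -> rat) (s : S) (m : M) : rat :=
  \sum_(e : E) (if enc e s == m then pE e * pS s else 0).

Definition perfect_secrecy (pE : E -> rat) (pS : S -> rat) : Prop :=
  forall s m, probM pE pS m != 0 -> probSM pE pS s m / probM pE pS m = pS s.

(* A spoofing strategy of order i: from the observed set of i messages,
   choose a new message not among them. *)
Definition admissible (i : nat) (f : {set M} -> M) : Prop :=
  forall X : {set M}, #|X| = i -> f X \notin X.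

(* success probability of strategy f of order i, key ~ pE, the set of sent
   source states uniformly distributed among the i-subsets of S *)
Definition spoof_success (pE : E -> rat) (i : nat) (f : {set M} -> M) : rat :=
  \sum_(e : E) pE e *
    ((\sum_(T : {set S} | #|T| == i) ((f (enc e @: T) \in valid e) : nat)%:R)
       / ('C(#|S|, i))%:R).

Definition deception_prob (pE : E -> rat) (i : nat) (p : rat) : Prop :=
  (exists f, admissible i f /\ spoof_success pE i f = p) /\
  (forall f, admissible i f -> spoof_success pE i f <= p).

Definition t_fold_secure (pE : E -> rat) (t : nat) : Prop :=
  forall i : nat, (i <= t)%N ->
    deception_prob pE i ((#|S| - i)%:R / (#|M| - i)%:R).

Definition optimal : Prop := (#|E| * 'C(#|S|, 2) = 'C(#|M|, 2))%N.

End Auth.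

From HB Require Import structures.
From mathcomp Require Import all_boot all_order all_algebra.
From mathcomp Require Import zify ring.
Set Implicit Arguments. Unset Strict Implicit. Unset Printing Implicit Defensive.
Import Order.TTheory GRing.Theory Num.Theory.
Local Open Scope ring_scope.

(* From a difference family F = {D_0, ..., D_(l-1)} over G, with every D_j
   enumerated as d_j(0), ..., d_j(k-1), we build the authentication system
   whose source states are 'I_k, whose messages are the elements of G, and
   whose keys are the pairs (j, g), encoding s as g + d_j(s).  The valid
   message sets are thus exactly the translates g + D_j.
   Everything reduces to four counting facts about these translates:
   - a source state s and a message m are linked by exactly l keys;
   - a message m lies in exactly l * k valid sets;
   - two distinct messages lie together in exactly lambda valid sets
     (this is the difference family property);
   - counting differences gives the identity l * k(k-1) = lambda (v-1).
   The first two give perfect secrecy and P_d0 = k/v, the third shows that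
   every order-1 spoofing strategy succeeds with probability lambda/(l k),
   which equals (k-1)/(v-1) by the identity; optimality, b = v(v-1)/(k(k-1)),
   is then equivalent to lambda = 1 since b = l v. *)

Lemma sum_nat_bool (T : finType) (P : pred T) :
  (\sum_(x : T) (P x : nat))%N = #|[set x | P x]|.
Proof.
rewrite -sum1dep_card [RHS]big_mkcond; apply: eq_bigr => x _; by case: (P x).
Qed.

Lemma card_fibres (T U : finType) (A : {set T}) (f : T -> U) :
  (\sum_(u : U) #|[set x in A | f x == u]|)%N = #|A|.
Proof.
rewrite -sum1_card (partition_big f predT) //; apply: eq_bigr => u _.
by rewrite -sum1dep_card.
Qed.

Lemma diff_count0 (G : finZmodType) (D : {set G}) : diff_count D 0 = 0%N.
Proof.
apply/eqP; rewrite cards_eq0; apply/eqP/setP => -[x y]; rewrite !inE /=.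
by rewrite subr_eq0 andNb andbF.
Qed.

(* Every ordered pair of distinct elements of D has exactly one difference. *)
Lemma sum_diff_count (G : finZmodType) (D : {set G}) :
  (\sum_(g : G) diff_count D g)%N = (#|D| * #|D| - #|D|)%N.
Proof.
set B := [set xy in setX D D | xy.1 != xy.2].
have -> : (\sum_(g : G) diff_count D g
           = \sum_(g : G) #|[set xy in B | (xy.1 - xy.2)%R == g]|)%N.
  apply: eq_bigr => g _; apply: eq_card => -[x y]; by rewrite !inE andbA.
rewrite card_fibres.
have := cardsID [set xy : G * G | xy.1 == xy.2] (setX D D).
rewrite cardsX.
have -> : setX D D :\: [set xy : G * G | xy.1 == xy.2] = B.
  by apply/setP => -[x y]; rewrite !inE andbC.
have -> : setX D D :&: [set xy : G * G | xy.1 == xy.2] = (fun x => (x, x)) @: D.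
  apply/setP => -[x y]; rewrite !inE /=; apply/idP/imsetP.
    by move=> /andP[/andP[hx _] /eqP <-]; exists x.
  by move=> [z hz [-> ->]]; rewrite hz eqxx.
rewrite card_imset; last by move=> a b [].
lia.
Qed.

Lemma count_translates (G : finZmodType) (D : {set G}) (m : G) :
  (\sum_(g : G) ((m - g)%R \in D : nat))%N = #|D|.
Proof.
rewrite (reindex_inj (subrI m)) /=.
under eq_bigr do rewrite subKr.
by rewrite sum_nat_bool; apply: eq_card => x; rewrite inE.
Qed.

Lemma count_translates2 (G : finZmodType) (D : {set G}) (m m' : G) : m != m' ->
  (\sum_(g : G) (((m - g)%R \in D) && ((m' - g)%R \in D) : nat))%N
  = diff_count D (m - m').
Proof.
move=> neq; rewrite sum_nat_bool /diff_count.
rewrite -(card_imset _ (f := fun g => (m - g, m' - g))); last first.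
  by move=> a b [] /subrI.
apply: eq_card => -[x y]; rewrite !inE /=.
apply/imsetP/idP => [[g]|].
  rewrite inE => /andP[hx hy] [-> ->]; rewrite hx hy /=.
  rewrite opprB subrKA eqxx andbT.
  apply: contra neq => /eqP /addIr ->; by [].
move=> /andP[/andP[hx hy] /andP[_ /eqP hxy]].
have ey : m' - (m - x) = y by rewrite opprB addrCA -opprB -hxy subKr.
exists (m - x); first by rewrite inE subKr hx /= ey.
by rewrite subKr ey.
Qed.

Lemma admissible0 (M : finType) (f : {set M} -> M) : admissible 0 f.
Proof. by move=> X /eqP; rewrite cards_eq0 => /eqP ->; rewrite inE. Qed.

(* With two distinct messages x != y, "answer y if x was observed, else x"
   is an admissible order-1 strategy. *)
Lemma admissible1_exists (M : finType) :
  (1 < #|M|)%N -> exists f : {set M} -> M, admissible 1 f.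
Proof.
move=> M_gt1.
have /card_gt0P [x _] : (0 < #|M|)%N by lia.
have /card_gt0P [y y_neq_x] : (0 < #|predC1 x|)%N by rewrite cardC1; lia.
exists (fun X : {set M} => if x \in X then y else x) => X /eqP /cards1P [z ->].
rewrite !inE; case: (eqVneq x z) => [<-|//].
by rewrite inE in y_neq_x.
Qed.

Lemma deception_prob_const (S M E : finType) (enc : E -> S -> M)
    (pE : E -> rat) (i : nat) (p : rat) :
  (exists f : {set M} -> M, admissible i f) ->
  (forall f : {set M} -> M, admissible i f -> spoof_success enc pE i f = p) ->
  deception_prob enc pE i p.
Proof.
move=> [f adm] succ; split; first by exists f; split; last exact: succ.
by move=> g /succ ->.
Qed.

Lemma sum_if (T : finType) (P : pred T) (c : rat) :
  \sum_(x : T) (if P x then c else 0) = ((\sum_(x : T) (P x : nat))%N)%:R * c.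
Proof.
rewrite natr_sum mulr_suml; apply: eq_bigr => x _.
by case: (P x); rewrite ?mul1r ?mul0r.
Qed.

Lemma sum_natr_mul (T : finType) (n : T -> nat) (c : rat) :
  \sum_(x : T) (n x)%:R * c = ((\sum_(x : T) n x)%N)%:R * c.
Proof. by rewrite natr_sum mulr_suml. Qed.

Lemma sum_if2 (T U : finType) (P : T -> pred U) (c : rat) :
  \sum_(x : T) \sum_(y : U) (if P x y then c else 0) =
  ((\sum_(x : T) \sum_(y : U) (P x y : nat))%N)%:R * c.
Proof. by rewrite -sum_natr_mul; apply: eq_bigr => x _; rewrite sum_if. Qed.

Lemma sum_card0 (T : finType) (h : {set T} -> rat) :
  \sum_(X : {set T} | #|X| == 0%N) h X = h set0.
Proof. by apply: big_pred1 => X /=; rewrite cards_eq0. Qed.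

Lemma sum_card1 (T : finType) (h : {set T} -> rat) :
  \sum_(X : {set T} | #|X| == 1%N) h X = \sum_(x : T) h [set x].
Proof.
rewrite -(big_imset h (h := set1) (A := predT)); last by move=> a b _ _ /set1_inj.
apply: eq_bigl => X; apply/cards1P/imsetP => [[x ->]|[x _ ->]]; by exists x.
Qed.

Lemma DF_ratio (l k v lam : nat) :
  (0 < l)%N -> (0 < k)%N -> (1 < v)%N -> (l * (k * k - k) = lam * (v - 1))%N ->
  lam%:R / (l * k)%:R = (k - 1)%:R / (v - 1)%:R :> rat.
Proof.
move=> l_gt0 k_gt0 v_gt1 fund.
apply/eqP; rewrite eqr_div ?pnatr_eq0 -?lt0n ?muln_gt0 ?l_gt0 ?subn_gt0 //.
by rewrite -!natrM eqr_nat; apply/eqP; nia.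
Qed.

Lemma optimal_iff_lambda1 (b k v lam : nat) : (1 < v)%N ->
  (b * (k * k - k) = lam * (v * (v - 1)))%N ->
  (b * 'C(k, 2) = 'C(v, 2))%N <-> lam = 1%N.
Proof.
move=> v_gt1 hb.
have bin2_double n : ('C(n, 2) * 2 = n * n - n)%N.
  by rewrite bin_ffact ffactnS ffactn1; nia.
have e : (b * 'C(k, 2) = lam * 'C(v, 2))%N.
  apply/eqP; rewrite -(eqn_pmul2r (_ : 0 < 2)%N) // -!mulnA !bin2_double.
  by apply/eqP; nia.
have C_gt0 : (0 < 'C(v, 2))%N by rewrite bin_gt0.
rewrite e; split => [h|->]; last by rewrite mul1n.
by apply/eqP; rewrite -(eqn_pmul2r C_gt0) mul1n h.
Qed.

Section DFSystem.
Variables (G : finZmodType) (k : nat) (F : seq {set G}).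
Hypothesis card_blocks : forall D, D \in F -> #|D| = k.

Local Notation key := ('I_(size F) * G)%type.

Let v_gt0 : (0 < #|G|)%N.
Proof. by apply/card_gt0P; exists 0. Qed.

Definition DFblock (j : 'I_(size F)) : {set G} := nth set0 F j.
Definition DFpoint (j : 'I_(size F)) (s : 'I_k) : G := nth 0 (enum (DFblock j)) s.
Definition DFenc (e : key) (s : 'I_k) : G := e.2 + DFpoint e.1 s.

Lemma card_DFblock j : #|DFblock j| = k.
Proof. by apply: card_blocks; rewrite /DFblock mem_nth. Qed.

Lemma size_enum_DFblock j : size (enum (DFblock j)) = k.
Proof. by rewrite -cardE card_DFblock. Qed.

Lemma card_key : #|{: key}| = (size F * #|G|)%N.
Proof. by rewrite card_prod card_ord. Qed.

(* Each key encodes injectively, since the points d_j(s) are distinct. *)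
Lemma DFenc_inj : auth_system DFenc.
Proof.
move=> e s t /addrI /eqP; rewrite /DFpoint.
by rewrite nth_uniq ?size_enum_DFblock ?enum_uniq // => /eqP st; apply: val_inj.
Qed.

Lemma DFenc_eq e s m : (DFenc e s == m) = (DFpoint e.1 s == m - e.2).
Proof. by rewrite /DFenc eq_sym [RHS]eq_sym subr_eq [in RHS]addrC. Qed.

Lemma count_DFenc e m :
  (\sum_(s < k) (DFenc e s == m : nat))%N = ((m - e.2) \in DFblock e.1 : nat).
Proof.
under eq_bigr do rewrite DFenc_eq.
set x := m - e.2.
rewrite -mem_enum -(count_uniq_mem x (enum_uniq (DFblock e.1))) -sum1_count.
rewrite (big_nth 0) size_enum_DFblock big_mkord [RHS]big_mkcond /=.
by apply: eq_bigr => i _; rewrite /DFpoint; case: (_ == _).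
Qed.

Lemma valid_DFenc e m : (m \in valid DFenc e) = (m - e.2 \in DFblock e.1).
Proof.
apply/imsetP/idP => [[s _ ->]|].
  rewrite /DFenc [_ + DFpoint _ _]addrC addrK /DFpoint -mem_enum.
  by rewrite mem_nth ?size_enum_DFblock.
rewrite -mem_enum => hm.
have hi : (index (m - e.2)%R (enum (DFblock e.1)) < k)%N.
  by rewrite -(size_enum_DFblock e.1) index_mem.
exists (Ordinal hi) => //.
by rewrite /DFenc /DFpoint /= nth_index // addrC subrK.
Qed.

Lemma count_keys s m : (\sum_(e : key) (DFenc e s == m : nat))%N = size F.
Proof.
rewrite -(pair_big predT predT (fun j g => (DFenc (j, g) s == m : nat))) /=.
rewrite -[RHS]mul1n -[in RHS](card_ord (size F)) mulnC -sum_nat_const.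
apply: eq_bigr => j _.
under eq_bigr do rewrite /DFenc /= eq_sym -subr_eq eq_sym.
rewrite (bigD1 (m - DFpoint j s)) //= eqxx big1 // => g /negbTE.
by rewrite eq_sym => ->.
Qed.

Lemma count_valid m : (\sum_(e : key) (m \in valid DFenc e : nat))%N = (size F * k)%N.
Proof.
under eq_bigr do rewrite valid_DFenc.
rewrite -(pair_big predT predT (fun j g => ((m - g)%R \in DFblock j : nat))) /=.
under eq_bigr do rewrite count_translates card_DFblock.
by rewrite sum_nat_const card_ord.
Qed.

(* Pairs (key, source state) producing m: one per valid set containing m. *)
Lemma count_encodings m :
  (\sum_(e : key) \sum_(s < k) (DFenc e s == m : nat))%N = (size F * k)%N.
Proof. rewrite -(count_valid m); apply: eq_bigr => e _; by rewrite count_DFenc valid_DFenc. Qed.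

Lemma DFenc_perfect_secrecy : (0 < size F)%N -> (0 < k)%N ->
  perfect_secrecy DFenc (uniform key) (uniform 'I_k).
Proof.
move=> F_gt0 k_gt0 s m _; rewrite /probSM /probM /uniform.
rewrite sum_if2 sum_if count_encodings count_keys card_ord card_key !natrM.
by field; rewrite !pnatr_eq0 -!lt0n F_gt0 k_gt0 v_gt0.
Qed.

(* Impersonation: whatever message is sent, it is accepted with
   probability l k / (l v) = k / v. *)
Lemma DFspoof0 (f : {set G} -> G) : (0 < size F)%N ->
  spoof_success DFenc (uniform key) 0 f = k%:R / #|G|%:R.
Proof.
move=> F_gt0; rewrite /spoof_success /uniform.
under eq_bigr do rewrite sum_card0 imset0 bin0 divr1.
rewrite -mulr_sumr -natr_sum count_valid card_key !natrM.
by field; rewrite !pnatr_eq0 -!lt0n F_gt0 v_gt0.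
Qed.

Variable lam : nat.
Hypothesis DF_blocks : forall g : G, g != 0 -> (\sum_(D <- F) diff_count D g)%N = lam.

Lemma DF_blocks_ord g : g != 0 -> (\sum_(j < size F) diff_count (DFblock j) g)%N = lam.
Proof. by move=> /DF_blocks <-; rewrite (big_nth set0) big_mkord. Qed.

(* Counting all pairs of distinct elements inside blocks, by difference:
   l k(k-1) = lambda (v-1). *)
Lemma DF_fundamental : (size F * (k * k - k) = lam * (#|G| - 1))%N.
Proof.
have -> : (lam * (#|G| - 1)
           = \sum_(g : G | g != 0%R) \sum_(j < size F) diff_count (DFblock j) g)%N.
  rewrite (eq_bigr (fun _ => lam)); last by move=> g /DF_blocks_ord.
  rewrite sum_nat_const mulnC; congr (_ * _)%N.
  rewrite subn1 -(cardC1 (0 : G)); apply: eq_card => x; by rewrite !inE.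
rewrite exchange_big /= -[X in (X * _)%N]card_ord -sum_nat_const.
apply: eq_bigr => j _.
by rewrite -(card_DFblock j) -sum_diff_count (bigD1 (0:G)) //= diff_count0.
Qed.

Lemma count_valid2 m m' : m != m' ->
  (\sum_(e : key) ((m \in valid DFenc e) && (m' \in valid DFenc e) : nat))%N = lam.
Proof.
move=> neq; under eq_bigr do rewrite !valid_DFenc.
rewrite -(pair_big predT predT (fun j g =>
  (((m - g)%R \in DFblock j) && ((m' - g)%R \in DFblock j) : nat))) /=.
under eq_bigr do rewrite count_translates2 //.
by apply: DF_blocks_ord; rewrite subr_eq0.
Qed.

(* For an admissible order-1 strategy f, the pairs (key, observed state) for
   which the substituted message is valid are counted, message by message,
   by count_valid2: there are v * lambda of them. *)
Lemma count_spoof1 (f : {set G} -> G) : admissible 1 f ->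
  (\sum_(e : key) \sum_(s < k) (f [set DFenc e s] \in valid DFenc e : nat))%N
  = (#|G| * lam)%N.
Proof.
move=> adm.
have per_key e : (\sum_(s < k) (f [set DFenc e s] \in valid DFenc e : nat)
  = \sum_(m : G) ((m \in valid DFenc e) && (f [set m] \in valid DFenc e) : nat))%N.
  transitivity (\sum_(s < k) \sum_(m : G)
                  ((DFenc e s == m) * (f [set m] \in valid DFenc e)))%N.
    apply: eq_bigr => s _; rewrite (bigD1 (DFenc e s)) //= eqxx mul1n.
    by rewrite big1 ?addn0 // => m; rewrite eq_sym => /negbTE ->.
  rewrite exchange_big /=; apply: eq_bigr => m _.
  by rewrite -big_distrl /= count_DFenc -valid_DFenc mulnb.
rewrite (eq_bigr _ (fun e _ => per_key e)) exchange_big /=.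
rewrite (eq_bigr (fun _ => lam)) ?sum_nat_const // => m _.
apply: count_valid2.
by have := adm [set m] (cards1 m); rewrite inE eq_sym.
Qed.

(* Substitution: every admissible strategy succeeds with probability
   (v lambda) / (l v k) = lambda / (l k). *)
Lemma DFspoof1 (f : {set G} -> G) : (0 < size F)%N -> (0 < k)%N -> admissible 1 f ->
  spoof_success DFenc (uniform key) 1 f = lam%:R / (size F * k)%:R.
Proof.
move=> F_gt0 k_gt0 adm; rewrite /spoof_success /uniform card_ord.
under eq_bigr do rewrite sum_card1 bin1 -natr_sum.
rewrite (eq_bigr (fun e =>
   ((\sum_(s < k) (f [set DFenc e s] \in valid DFenc e : nat))%N)%:R
   * (1 / #|{: key}|%:R / k%:R))); last first.
  by move=> e _; under eq_bigr do rewrite imset_set1; rewrite !mul1r mulrCA.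
rewrite sum_natr_mul count_spoof1 // card_key !natrM.
by field; rewrite !pnatr_eq0 -!lt0n F_gt0 k_gt0 v_gt0.
Qed.

Lemma DFenc_onefold_secure : (0 < size F)%N -> (0 < k)%N -> (1 < #|G|)%N ->
  t_fold_secure DFenc (uniform key) 1.
Proof.
move=> F_gt0 k_gt0 v_gt1 [_|[_|//]]; rewrite card_ord.
- apply: deception_prob_const; first by exists (fun _ => 0); exact: admissible0.
  by move=> f _; rewrite !subn0 DFspoof0.
- apply: deception_prob_const; first exact: admissible1_exists.
  by move=> f adm; rewrite DFspoof1 // (DF_ratio F_gt0 k_gt0 v_gt1 DF_fundamental).
Qed.

End DFSystem.

Theorem mainTheorem3 (G : finZmodType) (k lambda : nat) (F : seq {set G}) :
  (2 <= k)%N -> (k <= #|G|)%N -> (0 < lambda)%N -> is_DF F k lambda ->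
  exists (S M E : finType) (enc : E -> S -> M),
    auth_system enc /\ #|S| = k /\ #|M| = #|G| /\
    (#|E| * (k * k - k) = lambda * (#|G| * (#|G| - 1)))%N /\
    perfect_secrecy enc (uniform E) (uniform S) /\
    t_fold_secure enc (uniform E) 1 /\
    (optimal S M E <-> lambda = 1%N).
Proof.
move=> k_gt1 k_le_v lam_gt0 [card_blocks DF_blocks].
have fund := DF_fundamental card_blocks DF_blocks.
have k_gt0 : (0 < k)%N by lia.
have v_gt1 : (1 < #|G|)%N by lia.
have F_gt0 : (0 < size F)%N.
  rewrite lt0n; apply/eqP => F0; move: fund.
  by rewrite F0 mul0n => /esym/eqP; rewrite muln_eq0; lia.
have b_fund : (size F * #|G| * (k * k - k) = lambda * (#|G| * (#|G| - 1)))%N.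
  by rewrite mulnAC fund -mulnA [((_ - 1) * _)%N]mulnC.
exists 'I_k, G, ('I_(size F) * G)%type, (@DFenc G k F).
split; first exact: DFenc_inj.
split; first exact: card_ord.
split; first by [].
rewrite card_key.
split; first exact: b_fund.
split; first exact: DFenc_perfect_secrecy card_blocks F_gt0 k_gt0.
split; first exact: (DFenc_onefold_secure card_blocks DF_blocks F_gt0 k_gt0 v_gt1).
by rewrite /optimal card_key card_ord; apply: optimal_iff_lambda1 v_gt1 b_fund.
Qed.
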